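(* Let $r\ge 1$ and let $M$ be a finite list of nonzero vectors generating $\mathbb{F}_2^r$, in which each $u\in\mathbb{F}_2^r\setminus\{0\}$ appears with multiplicity $a_u\ge 0$. Assume the $a_u$ ($u\neq 0$) are not all of the same parity. Let $M'$ be the list in which each $u\in\mathbb{F}_2^r\setminus\{0\}$ appears with multiplicity $a_u+1$. Then $d(M)=d(M')$.
   Context: For a finite list $M=(v_1,\dots,v_n)$ of nonzero vectors generating $\mathbb{F}_2^r$, the Cayley graph $G(\mathbb{F}_2^r,M)$ has Laplacian $L$ indexed by $\mathbb{F}_2^r$ with $L_{u,u}=n$ and $L_{u,w}=-\#\{i:u+v_i=w\}$ for $u\ne w$; $\operatorname{coker}L\cong\mathbb{Z}\oplus K(G)$ with $K(G)$ finite abelian (the sandpile group). $d(M)$ denotes the number of even-order cyclic factors in the invariant factor decomposition of $K(G(\mathbb{F}_2^r,M))$, i.e. $d(M)=\dim_{\mathbb{F}_2}K(G)\otimes\mathbb{Z}/2\mathbb{Z}$. *)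

From HB Require Import structures.
From mathcomp Require Import all_boot all_order all_algebra.
Set Implicit Arguments. Unset Strict Implicit. Unset Printing Implicit Defensive.
Import Order.TTheory GRing.Theory Num.Theory.
Local Open Scope ring_scope.

(* Vertices of the Cayley graph: the vector space F_2^r, as row vectors. *)
Notation vec r := 'rV['F_2]_r.

Definition nV (r : nat) : nat := #|{: vec r}|.

Definition laplacian (r : nat) (M : seq (vec r)) : 'M[int]_(nV r) :=
  \matrix_(i, j)
    let u := (enum_val i : vec r) in let w := (enum_val j : vec r) in
    if u == w then (size M)%:Z else - (count (fun v => u + v == w) M)%:Z.

Definition smith_diag m n (A : 'M[int]_(m, n)) : seq int :=
  match int_Smith_normal_form A with
  | existT2 _ _ (existT2 _ _ (exist2 d _ _)) => d
  end.

(* coker L = (+)_{i < nV} Z/d_i ; the Z-summand(s) are d_i = 0 and the sandpile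
   group K(G) is the torsion part.  d(M) = number of even-order cyclic factors,
   i.e. number of nonzero even diagonal entries of the Smith normal form. *)
Definition dM (r : nat) (M : seq (vec r)) : nat :=
  let d := smith_diag (laplacian M) in
  count (fun i => (d`_i != 0) && ~~ odd (absz d`_i)) (iota 0 (nV r)).

From HB Require Import structures.
From mathcomp Require Import all_boot all_order all_algebra.
From mathcomp Require Import zify ring.
Import Order.TTheory GRing.Theory Num.Theory.
Local Open Scope ring_scope.
Set Implicit Arguments. Unset Strict Implicit. Unset Printing Implicit Defensive.

(* Reducing a Smith normal form [L = U D V] of the Laplacian over Q and over F_2
   gives [d(M) = rank_Q L - rank_F2 L].  Over Q the Dirichlet energy shows that
   the left kernel of [L] consists of the constant vectors as soon as [M]
   generates, so [rank_Q L] is the same for [M] and [M'].  Mod 2, [L] is the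
   group matrix of [a : F_2^r -> F_2] with [a s = a_s] for [s != 0] and
   [a 0 = |M|]; as [2^r - 1] is odd, passing to [M'] replaces [a] by [a + 1],
   i.e. adds the all-ones matrix [J].  In the group algebra [F_2[F_2^r]] every
   [x] satisfies [x^2 = (sum x) delta_0], so [x a = 0] with [sum x = 1] forces
   [a = 0].  Since [a] is not constant, every [x] in the left kernel of [L] mod 2
   has [sum x = 0], hence [x J = 0], and the kernels mod 2 for [M] and [M']
   coincide. *)

Local Notation lapmx F M := (map_mx (intr : int -> F) (laplacian M)).

Lemma Fp2_eq01 (y : 'F_2) : y = 0 \/ y = 1.
Proof. by case: y => [[|[|n]]] // ?; [left | right]; apply/val_inj. Qed.

Lemma Fp2_mulrr (y : 'F_2) : y * y = y.
Proof. by case: (Fp2_eq01 y) => ->; rewrite ?mul0r ?mul1r. Qed.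

Lemma Fp2_addrr (y : 'F_2) : y + y = 0.
Proof. exact: addrr_pchar2 (pchar_Fp (isT : prime 2)) y. Qed.

Lemma Fp2_oppr (y : 'F_2) : - y = y.
Proof. exact: oppr_pchar2 (pchar_Fp (isT : prime 2)) y. Qed.

Lemma Fp2_natr_neq0 m : ((m%:R : 'F_2) != 0) = odd m.
Proof. by rewrite -val_eqE /= (val_Fp_nat (p := 2)) // modn2; case: odd. Qed.

Lemma Fp2_intr_neq0 (z : int) : ((z%:~R : 'F_2) != 0) = odd `|z|%N.
Proof. by case: z => m; rewrite ?NegzE ?mulrNz ?oppr_eq0 /= Fp2_natr_neq0. Qed.

Lemma addvv r (w : vec r) : w + w = 0.
Proof. by apply/matrixP => i j; rewrite !mxE Fp2_addrr. Qed.

Lemma oppv r (w : vec r) : - w = w.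
Proof. by apply/matrixP => i j; rewrite !mxE Fp2_oppr. Qed.

Lemma addv_eq r (g v h : vec r) : (g + v == h) = (g == h + v).
Proof. by rewrite -{1}(oppv v) subr_eq. Qed.

Lemma addv_eql r (h v : vec r) : (h + v == h) = (v == 0).
Proof. by rewrite -{2}[h]addr0 (inj_eq (addrI h)). Qed.

Lemma unitmx_map_intr (R : comUnitRingType) n (A : 'M[int]_n) :
  A \in unitmx -> map_mx (intr : int -> R) A \in unitmx.
Proof. by rewrite !unitmxE det_map_mx => /(rmorph_unit (intr : int -> R)). Qed.

Lemma mxrank_map_intr_equiv (F : fieldType) m n
    (L : 'M[int]_m) (D : 'M[int]_(m, n)) (R : 'M[int]_n) :
  L \in unitmx -> R \in unitmx ->
  \rank (map_mx (intr : int -> F) (L *m D *m R)) = \rank (map_mx (intr : int -> F) D).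
Proof.
move=> uL uR; rewrite !map_mxM mxrankMfree ?row_free_unit ?unitmx_map_intr //.
by rewrite eqmxMfull // row_full_unit unitmx_map_intr.
Qed.

Lemma mxrank_diag_fun (F : fieldType) n (c : nat -> F) :
  \rank (\matrix_(i < n, j < n) (c i *+ (i == j :> nat))) =
  count (fun i => c i != 0) (iota 0 n).
Proof.
elim: n c => [|n IHn] c; first by rewrite flatmx0 mxrank0.
have -> : \matrix_(i < n.+1, j < n.+1) (c i *+ (i == j :> nat)) =
    block_mx (c 0%N)%:M 0 0 (\matrix_(i < n, j < n) (c i.+1 *+ (i == j :> nat)))
    :> 'M_(1 + n).
  apply/matrixP => i j; rewrite -(splitK i) -(splitK j).
  case: (split i) => i'; case: (split j) => j';
    by rewrite ?(block_mxEul, block_mxEur, block_mxEdl, block_mxEdr) !mxE ?ord1.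
rewrite (@rank_diag_block_mx F 1 1 n n) (IHn (fun i => c i.+1)) /=.
rewrite -(addn0 1%N) iotaDl count_map.
congr (_ + _)%N.
have [->|c0] := eqVneq (c 0%N) 0; first by rewrite -scalemx1 scale0r mxrank0.
by rewrite mxrank_unit // unitmxE det_scalar1 unitfE.
Qed.

(* Mod 2 only the odd invariant factors survive; in characteristic 0 all nonzero ones do. *)
Lemma smith_diag_count_even (F : numFieldType) n (A : 'M[int]_n) :
  let d := smith_diag A in
  (count (fun i => ((d`_i != 0) && ~~ odd (absz d`_i))%R) (iota 0 n)
   + \rank (map_mx (intr : int -> 'F_2) A))%N = \rank (map_mx (intr : int -> F) A).
Proof.
rewrite /smith_diag; case: (int_Smith_normal_form A) => L uL [R uR [d _ ->]] /=.
rewrite !mxrank_map_intr_equiv //.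
have map_diag (K : pzRingType) :
    map_mx (intr : int -> K) (\matrix_(i < n, j < n) (d`_i *+ (i == j :> nat))) =
    \matrix_(i, j) ((d`_i)%:~R *+ (i == j :> nat)).
  by apply/matrixP => i j; rewrite !mxE rmorphMn.
rewrite !map_diag (mxrank_diag_fun _ (fun i => (d`_i)%:~R : 'F_2)).
rewrite (mxrank_diag_fun _ (fun i => (d`_i)%:~R : F)).
under [in RHS]eq_count do rewrite intr_eq0.
under [X in (_ + X)%N]eq_count do rewrite Fp2_intr_neq0.
rewrite -count_predUI (eq_count (a1 := predI _ _) (a2 := pred0)) => [|i /=]; last first.
  by case: odd; rewrite ?andbF.
rewrite count_pred0 addn0.
apply: eq_count => i /=; case: (d`_i) => [[|m]|m] //=; by case: odd.
Qed.

Lemma mxrank_eq_ker (F : fieldType) n (A B : 'M[F]_n) :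
  (forall u : 'rV_n, u *m A = 0 <-> u *m B = 0) -> \rank A = \rank B.
Proof.
move=> kerAB.
have kerA_sub (X Y : 'M[F]_n) : (forall u : 'rV_n, u *m X = 0 -> u *m Y = 0) ->
    (kermx X <= kermx Y)%MS.
  move=> XY; apply/sub_kermxP/row_matrixP => i.
  by rewrite row_mul row0 XY // -row_mul mulmx_ker row0.
have /eqmxP eq_ker : (kermx A == kermx B)%MS.
  by rewrite !kerA_sub // => u /kerAB.
have := mxrank_ker A; rewrite eq_ker mxrank_ker.
have := rank_leq_col A; have := rank_leq_col B; lia.
Qed.

Lemma mulmx_row_enum (R : pzRingType) (T : finType) (u : 'rV[R]_#|T|) (A : 'M_#|T|) j :
  (u *m A) 0 j = \sum_t u 0 (enum_rank t) * A (enum_rank t) j.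
Proof.
rewrite mxE [RHS](big_enum_val (A := predT)).
by apply: eq_bigr => i _; rewrite enum_valK.
Qed.

Lemma laplacian_nil r : laplacian [::] = 0 :> 'M_(nV r).
Proof. by apply/matrixP => i j; rewrite !mxE /=; case: ifP. Qed.

Lemma laplacian_cons r (v : vec r) (M : seq (vec r)) : v != 0 ->
  laplacian (v :: M) = laplacian M + \matrix_(i, j)
    ((enum_val i == enum_val j :> vec r)%:R - (enum_val i + v == enum_val j :> vec r)%:R).
Proof.
move=> v0; apply/matrixP => i j; rewrite !mxE /=.
have [->|ne_ij] := eqVneq; first by rewrite addv_eql (negbTE v0) /=; lia.
by case: (_ + v == _) => /=; lia.
Qed.

Lemma mulmx_laplacian (R : pzRingType) r (M : seq (vec r)) (u : 'rV[R]_(nV r)) h :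
  0 \notin M ->
  (u *m lapmx R M) 0 (enum_rank h) =
  \sum_(v <- M) (u 0 (enum_rank h) - u 0 (enum_rank (h + v))).
Proof.
have sum_delta (f : vec r -> R) c : \sum_g f g * (g == c)%:R = f c.
  rewrite (bigD1 c) //= eqxx mulr1 big1 ?addr0 // => g /negbTE ->.
  by rewrite mulr0.
elim: M => [|v M IHM]; first by rewrite laplacian_nil map_mx0 mulmx0 mxE big_nil.
rewrite in_cons negb_or eq_sym => /andP[v0 M0].
rewrite laplacian_cons // raddfD mulmxDr mxE IHM // big_cons addrC; congr (_ + _).
rewrite mulmx_row_enum -(sum_delta (fun g => u 0 (enum_rank g)) h).
rewrite -(sum_delta (fun g => u 0 (enum_rank g)) (h + v)) -sumrB.
by apply: eq_bigr => g _; rewrite !mxE !enum_rankK raddfB /= !mulrz_nat mulrBr addv_eq.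
Qed.

Lemma span_translation_invariant r (T : Type) (f : vec r -> T) (M : seq (vec r)) :
  (forall v h, v \in M -> f (h + v) = f h) ->
  forall s, s \in <<M>>%VS -> forall h, f (h + s) = f h.
Proof.
pose P s := forall h : vec r, f (h + s) = f h.
move=> fM s; rewrite -[M]/(tval (in_tuple M)) => /coord_span ->; rewrite -/(P _).
apply: big_ind => [|s1 s2 IH1 IH2|i _] h.
- by rewrite addr0.
- by rewrite addrA IH2 IH1.
case: (Fp2_eq01 (coord (in_tuple M) i s)) => ->; first by rewrite scale0r addr0.
by rewrite scale1r fM ?mem_nth.
Qed.

(* Dirichlet energy: [sum_v sum_h (x h - x (h + v))^2 = 2 (x . L x)] vanishes. *)
Lemma laplacian_ker_invariant (F : realFieldType) r (M : seq (vec r))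
    (u : 'rV[F]_(nV r)) :
  0 \notin M -> u *m lapmx F M = 0 ->
  forall v h, v \in M -> u 0 (enum_rank (h + v)) = u 0 (enum_rank h).
Proof.
move=> M0 uL0; pose x g := u 0 (enum_rank g).
have row0 h : \sum_(v <- M) (x h - x (h + v)) = 0.
  by rewrite -mulmx_laplacian // uL0 mxE.
have energy v : \sum_h (x h - x (h + v)) ^+ 2 = 2 * \sum_h x h * (x h - x (h + v)).
  rewrite (eq_bigr (fun h => x h * (x h - x (h + v)) + x (h + v) * (x (h + v) - x h))).
    rewrite big_split /= [X in _ + X](reindex_inj (addIr v)) /=.
    under [X in _ + X]eq_bigr => h _ do rewrite -addrA addvv addr0.
    by rewrite mulr_natl mulr2n.
  by move=> h _; ring.
have energy0 : \sum_(v <- M) \sum_h (x h - x (h + v)) ^+ 2 = 0.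
  under eq_bigr => v _ do rewrite energy.
  rewrite -mulr_sumr exchange_big /=.
  by under eq_bigr => h _ do rewrite -mulr_sumr row0 mulr0; rewrite big1 ?mulr0.
move=> v h vM; apply/esym/eqP; rewrite -subr_eq0 -sqrf_eq0.
have /psumr_eq0P -> // : \sum_h (x h - x (h + v)) ^+ 2 = 0.
  move/eqP: energy0; rewrite psumr_eq0 => [/allP/(_ v vM)/eqP //|w _].
  by apply: sumr_ge0 => g _; apply: sqr_ge0.
by move=> g _; apply: sqr_ge0.
Qed.

Lemma laplacian_kerP (F : realFieldType) r (M : seq (vec r)) (u : 'rV[F]_(nV r)) :
  0 \notin M -> <<M>>%VS = fullv ->
  u *m lapmx F M = 0 <-> forall g, u 0 (enum_rank g) = u 0 (enum_rank 0).
Proof.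
move=> M0 spanM; split => [uL0 g | uconst].
  have /= inv := span_translation_invariant (f := fun g => u 0 (enum_rank g))
    (laplacian_ker_invariant M0 uL0).
  by rewrite -[g]add0r inv // spanM memvf.
apply/matrixP => i j; rewrite ord1 [RHS]mxE -(enum_valK j) mulmx_laplacian //.
by rewrite big1 // => v _; rewrite !uconst subrr.
Qed.

Lemma mxrank_laplacian_spanning (F : realFieldType) r (M M' : seq (vec r)) :
  0 \notin M -> 0 \notin M' -> <<M>>%VS = fullv -> <<M'>>%VS = fullv ->
  \rank (lapmx F M) = \rank (lapmx F M').
Proof.
move=> M0 M'0 spanM spanM'; apply: mxrank_eq_ker => u.
by rewrite laplacian_kerP // laplacian_kerP.
Qed.

Lemma sum_Fp2_periodic r (f : vec r -> 'F_2) s :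
  s != 0 -> (forall t, f (t + s) = f t) -> \sum_t f t = 0.
Proof.
move=> s0 fs.
have /existsP[k /eqP sk] : [exists k, s 0 k == 1].
  apply: contraR s0; rewrite negb_exists => /forallP s_ne1.
  apply/eqP/matrixP => i j; rewrite ord1 mxE.
  by case: (Fp2_eq01 (s 0 j)) => // sj; move: (s_ne1 j); rewrite sj eqxx.
(* [t 0 k] separates each [t] from its partner [t + s]. *)
have split1 (t : vec r) : t 0 k + (t + s) 0 k = 1 by rewrite mxE sk addrA Fp2_addrr add0r.
transitivity (\sum_t (f t * t 0 k + f (t + s) * (t + s) 0 k)).
  by apply: eq_bigr => t _; rewrite fs -mulrDr split1 mulr1.
rewrite big_split /= [X in X + _](reindex_inj (addIr s)) /=.
exact: Fp2_addrr.
Qed.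

Lemma sum_mul_shift_Fp2 r (x : vec r -> 'F_2) s :
  \sum_t x t * x (t + s) = (s == 0)%:R * \sum_t x t.
Proof.
have [-> | s0] := eqVneq s 0.
  by rewrite mul1r; apply: eq_bigr => t _; rewrite addr0 Fp2_mulrr.
rewrite mul0r (sum_Fp2_periodic s0) // => t.
by rewrite -addrA addvv addr0 mulrC.
Qed.

(* As [x * x = (sum x) delta_0], an [x] with [sum x = 1] is a unit of the group algebra. *)
Lemma conv_aug1_eq0 r (x a : vec r -> 'F_2) :
  (forall h, \sum_g x g * a (g + h) = 0) -> \sum_g x g = 1 -> forall k, a k = 0.
Proof.
move=> xa0 x1 k.
have conv_assoc : \sum_t x t * (\sum_g x g * a (g + (t + k))) =
                  \sum_s (\sum_t x t * x (t + s)) * a (s + k).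
  rewrite (eq_bigr (fun t => \sum_s x t * x (t + s) * a (s + k))) => [|t _].
    by rewrite exchange_big /=; apply: eq_bigr => s _; rewrite mulr_suml.
  rewrite mulr_sumr (reindex_inj (addrI t)) /=.
  by apply: eq_bigr => s _; rewrite mulrA addrACA addvv add0r.
move: conv_assoc; rewrite big1 => [|t _]; last by rewrite xa0 mulr0.
under eq_bigr => s _ do rewrite sum_mul_shift_Fp2 x1 mulr1.
rewrite (bigD1 0) //= eqxx mul1r add0r big1 ?addr0 => [<- // | s /negbTE ->].
by rewrite mulr0n mul0r.
Qed.

Definition group_mx (R : Type) r (a : vec r -> R) : 'M[R]_(nV r) :=
  \matrix_(i, j) a (enum_val i + enum_val j).

Lemma group_mx_ker_add1 r (a b : vec r -> 'F_2) k1 k2 :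
  (forall s, b s = a s + 1) -> a k1 != a k2 ->
  forall u : 'rV_(nV r), u *m group_mx a = 0 <-> u *m group_mx b = 0.
Proof.
have ker_sub (a' b' : vec r -> 'F_2) : (forall s, b' s = a' s + 1) -> a' k1 != a' k2 ->
    forall u : 'rV_(nV r), u *m group_mx a' = 0 -> u *m group_mx b' = 0.
  move=> b'E a'k12 u ua'0; pose x g := u 0 (enum_rank g).
  have conv0 h : \sum_g x g * a' (g + h) = 0.
    transitivity ((u *m group_mx a') 0 (enum_rank h)); last by rewrite ua'0 mxE.
    by rewrite mulmx_row_enum; apply: eq_bigr => g _; rewrite mxE !enum_rankK.
  have x0 : \sum_g x g = 0.
    case: (Fp2_eq01 (\sum_g x g)) => // x1.
    by move: a'k12; rewrite !(conv_aug1_eq0 conv0 x1) eqxx.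
  apply/matrixP => i j; rewrite ord1 -(enum_valK j) mulmx_row_enum [RHS]mxE.
  under eq_bigr => g _ do rewrite mxE !enum_rankK b'E mulrDr mulr1.
  by rewrite big_split /= conv0 x0 addr0.
move=> bE ak12 u; split; first exact: ker_sub.
apply: ker_sub => [s | ]; first by rewrite bE -addrA Fp2_addrr addr0.
by rewrite !bE (inj_eq (addIr 1)).
Qed.

(* Mod 2 the entry [L_(u,w)] depends only on [u + w]; the diagonal [|M|] sits at 0. *)
Definition lapF2_coef r (M : seq (vec r)) (s : vec r) : 'F_2 :=
  if s == 0 then (size M)%:R else (count_mem s M)%:R.

Lemma laplacian_Fp2 r (M : seq (vec r)) : lapmx 'F_2 M = group_mx (lapF2_coef M).
Proof.
apply/matrixP => i j; rewrite !mxE /lapF2_coef addv_eq add0r.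
case: eqP => _; first by rewrite -pmulrn.
rewrite raddfN /= Fp2_oppr -pmulrn; congr _%:R; apply: eq_count => v /=.
by rewrite addrC addv_eq addrC.
Qed.

Lemma size_sum_count_mem (T : finType) (s : seq T) : size s = (\sum_t count_mem t s)%N.
Proof.
elim: s => [|y s IHs] /=; first by rewrite big1.
rewrite big_split /= -IHs (bigD1 y) //= eqxx big1 // => t /negbTE.
by rewrite eq_sym => ->.
Qed.

Lemma lapF2_coef_succ r (M M' : seq (vec r)) : (1 <= r)%N -> 0 \notin M ->
  (forall u, count_mem u M' = (if u == 0 then 0 else (count_mem u M).+1)) ->
  forall s, lapF2_coef M' s = lapF2_coef M s + 1.
Proof.
move=> r_gt0 M0 M'E s; rewrite /lapF2_coef.
have [_ | s0] := eqVneq s 0; last by rewrite M'E (negbTE s0) mulrSr.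
rewrite !size_sum_count_mem !natr_sum (bigD1 0) //= [in RHS](bigD1 0) //= M'E eqxx.
rewrite (count_memPn M0) !add0r.
under eq_bigr => t /negbTE t0 do rewrite M'E t0 mulrSr.
rewrite big_split /=; congr (_ + _).
have odd_nonzero : odd #|predC1 (0 : vec r)|.
  have := oddS (2 ^ r).-1; rewrite prednK ?expn_gt0 // oddX /= orbF.
  by rewrite cardC1 card_mx card_Fp // mul1n eqn0Ngt r_gt0 => /esym/negbFE.
rewrite (eq_bigl (mem (predC1 0))) // sumr_const; move: odd_nonzero.
by rewrite -Fp2_natr_neq0; case: (Fp2_eq01 #|predC1 (0 : vec r)|%:R) => ->; rewrite ?eqxx.
Qed.

Unset Implicit Arguments.
Set Strict Implicit.

Theorem mainTheorem5 (r : nat) (M M' : seq 'rV['F_2]_r) :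
  (1 <= r)%N ->
  0 \notin M ->
  (<<M>>%VS = fullv) ->
  (exists u w : 'rV['F_2]_r,
     [/\ u != 0, w != 0 & odd (count_mem u M) != odd (count_mem w M)]) ->
  (forall u : 'rV['F_2]_r,
     count_mem u M' = (if u == 0 then 0 else (count_mem u M).+1)) ->
  dM M = dM M'.
Proof.
move=> r_gt0 M0 spanM [u [w [u0 w0 odd_uw]]] M'E.
have M'0 : 0 \notin M' by apply/count_memPn; rewrite M'E eqxx.
have spanM' : <<M'>>%VS = fullv.
  apply/eqP; rewrite eqEsubv subvf -{1}spanM sub_span // => v vM.
  have v0 : v != 0 by apply: contraNneq M0 => <-.
  by rewrite -has_pred1 has_count M'E (negbTE v0).
have rankQ := mxrank_laplacian_spanning rat M0 M'0 spanM spanM'.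
have rankF2 : \rank (lapmx 'F_2 M) = \rank (lapmx 'F_2 M').
  rewrite !laplacian_Fp2; apply: mxrank_eq_ker.
  apply: (group_mx_ker_add1 (k1 := u) (k2 := w) (lapF2_coef_succ r_gt0 M0 M'E)).
  rewrite /lapF2_coef (negbTE u0) (negbTE w0); apply: contra odd_uw => /eqP uw.
  by rewrite -!Fp2_natr_neq0 uw.
apply: (@addIn (\rank (lapmx 'F_2 M))).
by rewrite {2}rankF2 /dM !(smith_diag_count_even rat) rankQ.
Qed.
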